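(* Let $G$ be a line graph, let $D^*$ be a minimal dominating set of $G$, let $v$ be an isolated vertex of $G[D^*]$, and let $u$ be a neighbor of $v$. Write $\{x_1,\ldots,x_k\}=P_{D^*}(v)\setminus N[u]$ and $U=N[u]\cup\bigcup_{i=1}^k\big((N[x_i]\setminus N[v])\cup\{x_i\}\big)$. Then for any set $Z=\{z_1,\ldots,z_k\}$ with $z_i\in N(x_i)\setminus N[v]$ for each $i\in\{1,\ldots,k\}$, we have $U\subseteq N[Z\cup\{u\}]$.
   Context: Graphs are finite, simple, undirected; $N(x)$ is the open and $N[x]=N(x)\cup\{x\}$ the closed neighborhood, $N[S]=\bigcup_{x\in S}N[x]$. A line graph is a graph isomorphic to $L(H)$ for some graph $H$ ($L(H)$ has vertex set $E(H)$, adjacency = sharing an endpoint). A dominating set is $D\subseteq V(G)$ with $N[D]=V(G)$; minimal if no proper subset is dominating. For a dominating set $D$ and $x\in D$, $P_D(x)=N(x)\setminus N[D\setminus\{x\}]$ is the set of private neighbors of $x$. *)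

From mathcomp Require Import all_boot.
Set Implicit Arguments. Unset Strict Implicit. Unset Printing Implicit Defensive.

Definition simple_graph (T : finType) (e : rel T) : Prop :=
  symmetric e /\ irreflexive e.

Definition onbhd (T : finType) (e : rel T) (x : T) : {set T} := [set y | e x y].
Definition cnbhd (T : finType) (e : rel T) (x : T) : {set T} := x |: onbhd e x.
Definition cnbhdS (T : finType) (e : rel T) (S : {set T}) : {set T} :=
  \bigcup_(x in S) cnbhd e x.

Definition dominating (T : finType) (e : rel T) (D : {set T}) : Prop :=
  cnbhdS e D = setT.

Definition minimal_dominating (T : finType) (e : rel T) (D : {set T}) : Prop :=
  dominating e D /\ forall D' : {set T}, D' \proper D -> ~ dominating e D'.

Definition private_nbrs (T : finType) (e : rel T) (D : {set T}) (x : T) : {set T} :=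
  onbhd e x :\: cnbhdS e (D :\ x).

(* G is a line graph: G is isomorphic to L(H) for some finite simple graph H.
   f sends each vertex of G to an edge {a,b} of H, bijectively onto E(H),
   and adjacency in G is "distinct edges sharing an endpoint". *)
Definition line_graph (T : finType) (e : rel T) : Prop :=
  exists (V : finType) (h : rel V) (f : T -> {set V}),
    [/\ simple_graph h,
        injective f,
        (forall x, exists a b, h a b /\ f x = [set a; b]),
        (forall a b, h a b -> exists x, f x = [set a; b]) &
        (forall x y, e x y = (x != y) && (f x :&: f y != set0))].

(** Every vertex [x] of [X] lies in [N(v)], and so does [z x]; in a line graph
    all neighbours of [x] that avoid [N[v]] share the endpoint of the edge [x]
    not covered by the edge [v], hence are pairwise adjacent.  So [z x]
    dominates [x] together with all of [N[x] \ N[v]], while [u] dominates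
    [N[u]]. *)
From mathcomp Require Import all_boot.

Set Implicit Arguments.
Unset Strict Implicit.
Unset Printing Implicit Defensive.

Lemma pair_meet_of_disjoint (V : finType) (a b : V) (B C D : {set V}) :
  [set a; b] :&: B != set0 -> [set a; b] :&: C != set0 ->
  [set a; b] :&: D != set0 -> B :&: D = set0 -> C :&: D = set0 ->
  B :&: C != set0.
Proof.
move=> /set0Pn [p /setIP [abp pB]] /set0Pn [q /setIP [abq qC]]
  /set0Pn [r /setIP [abr rD]] BD CD.
have pr : p != r.
  by apply/eqP=> pr; have := in_set0 p; rewrite -BD inE pB pr rD.
have qr : q != r.
  by apply/eqP=> qr; have := in_set0 q; rewrite -CD inE qC qr rD.
have pq : p = q.
  move: abp abq abr pr qr; rewrite !inE.
  by do 3!case/orP=> /eqP->; rewrite ?eqxx.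
by apply/set0Pn; exists q; rewrite inE -pq pB pq qC.
Qed.

Lemma line_graph_nbhd_clique (T : finType) (e : rel T) (x y w1 w2 : T) :
  line_graph e -> y \in onbhd e x ->
  w1 \in onbhd e x :\: cnbhd e y -> w2 \in onbhd e x :\: cnbhd e y ->
  w1 \in cnbhd e w2.
Proof.
move=> [V [h [f [_ _ f_edge _ e_meet]]]].
rewrite !inE !e_meet !negb_or !negb_and !negbK.
move=> /andP [_ xy] /andP [/andP [yw1 /orP [w1y | yw1_disj]] /andP [_ xw1]].
  by rewrite eq_sym w1y in yw1.
move=> /andP [/andP [yw2 /orP [w2y | yw2_disj]] /andP [_ xw2]].
  by rewrite eq_sym w2y in yw2.
case: eqP => //= /eqP w1w2; rewrite eq_sym w1w2 /=.
have [a [b [_ fx]]] := f_edge x.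
rewrite fx in xy xw1 xw2.
by apply: (pair_meet_of_disjoint xw2 xw1 xy); rewrite setIC; apply/eqP.
Qed.

Lemma mem_cnbhdS (T : finType) (e : rel T) (S : {set T}) (y w : T) :
  y \in S -> w \in cnbhd e y -> w \in cnbhdS e S.
Proof. by move=> Sy yw; apply/bigcupP; exists y. Qed.

Theorem lemma5 (T : finType) (e : rel T) (D : {set T}) (v u : T)
    (z : T -> T) :
  simple_graph e ->
  line_graph e ->
  minimal_dominating e D ->
  v \in D ->
  onbhd e v :&: D = set0 ->
  u \in onbhd e v ->
  (forall x, x \in private_nbrs e D v :\: cnbhd e u ->
     z x \in onbhd e x :\: cnbhd e v) ->
  let X := private_nbrs e D v :\: cnbhd e u in
  let U := cnbhd e u :|:
           \bigcup_(x in X) ((cnbhd e x :\: cnbhd e v) :|: [set x]) in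
  U \subset cnbhdS e (u |: (z @: X)).
Proof.
move=> [e_sym _] e_line _ _ _ _ z_nbr; cbv zeta.
apply/subsetP => w /setUP [uw | /bigcupP [x Xx xw]].
  exact: mem_cnbhdS (setU11 _ _) uw.
have x_zx := z_nbr x Xx.
apply: (@mem_cnbhdS _ _ _ (z x)); first by rewrite setU1r ?imset_f.
have vx : v \in onbhd e x.
  by move: Xx; rewrite /private_nbrs !inE => /and3P [_ _]; rewrite e_sym.
have zx_x : x \in cnbhd e (z x).
  by move: x_zx; rewrite !inE [e _ x]e_sym => /andP [_ ->]; rewrite orbT.
case/setUP: xw => [/setDP [] | /set1P -> //].
rewrite {1}/cnbhd in_setU1 => /predU1P [-> // | xw] vw.
by apply: (line_graph_nbhd_clique e_line vx _ x_zx); rewrite in_setD vw.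
Qed.
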